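(* Assume the Continuum Hypothesis. Then there is a productively Baire space $X$ such that \textsc{Bob} has no winning strategy in $\mathsf{BM}_\mathrm{fin}(X)$.
   Context: A Baire space is a space in which countable intersections of dense open sets are dense; a Baire space $X$ is productively Baire if $X\times Y$ is Baire for every Baire space $Y$. The game $\mathsf{BM}_\mathrm{fin}(X)$: \textsc{Alice} plays a non-empty open set $A_0$; \textsc{Bob} plays a finite collection $\mathcal{B}_0$ of non-empty open subsets of $A_0$; in inning $n+1$, for each $B \in \mathcal{B}_n$ \textsc{Alice} plays a non-empty open set $A_B \subseteq B$, letting $\mathcal{A}_{n+1}=\{A_B : B\in\mathcal{B}_n\}$, and \textsc{Bob} plays a finite collection $\mathcal{B}_{n+1}$ of non-empty open subsets of $\bigcup\mathcal{A}_{n+1}$; \textsc{Bob} wins if $\bigcap_{n}\bigcup\mathcal{B}_n\neq\emptyset$, otherwise \textsc{Alice} wins. *)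

From HB Require Import structures.
From mathcomp Require Import all_boot all_order.
From mathcomp Require Import boolp classical_sets functions cardinality.
From mathcomp Require Import topology.
Set Implicit Arguments. Unset Strict Implicit. Unset Printing Implicit Defensive.
Local Open Scope classical_set_scope.
Local Open Scope card_scope.

Definition CH : Prop :=
  forall A : set (set nat), countable A \/ A #= [set: set nat].

Definition baire_space (X : topologicalType) : Prop :=
  forall F : nat -> set X, (forall n, open (F n) /\ dense (F n)) ->
    dense (\bigcap_n F n).

Definition productively_baire (X : topologicalType) : Prop :=
  baire_space X /\
  forall Y : topologicalType, baire_space Y -> baire_space (X * Y)%type.

(* Alice's move in inning n is a function a_n : set X -> set X, B |-> A_B,
   defined on Bob's previous collection B_{n-1}; the value is set0 outside it.
   For inning 0 we use the convention B_{-1} = {X}, so Alice's first move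
   is A_0 := a_0 setT.  Then A_n = a_n @` B_{n-1}. *)
Definition alice_legal (X : topologicalType) (prevB : set (set X))
    (a : set X -> set X) : Prop :=
  forall B : set X,
    (prevB B -> open (a B) /\ a B !=set0 /\ a B `<=` B) /\
    (~ prevB B -> a B = set0).

Definition bob_legal (X : topologicalType) (prevB : set (set X))
    (a : set X -> set X) (Bs : set (set X)) : Prop :=
  finite_set Bs /\
  forall B : set X, Bs B ->
    open B /\ B !=set0 /\ B `<=` \bigcup_(C in prevB) a C.

(* A strategy for Bob maps the list of Alice's moves so far
   [:: a_0; ...; a_n] to Bob's collection B_n (Bob's own earlier moves
   are determined by the strategy). *)
Definition bob_strategy (X : topologicalType) :=
  seq (set X -> set X) -> set (set X).

Definition bob_move (X : topologicalType) (s : bob_strategy X)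
    (a : nat -> (set X -> set X)) (n : nat) : set (set X) :=
  s (mkseq a n.+1).

Definition prev_bob (X : topologicalType) (s : bob_strategy X)
    (a : nat -> (set X -> set X)) (n : nat) : set (set X) :=
  if n is m.+1 then bob_move s a m else [set setT].

Definition bob_winning (X : topologicalType) (s : bob_strategy X) : Prop :=
  forall a : nat -> (set X -> set X),
    (forall n, (forall k, (k <= n)%N -> alice_legal (prev_bob s a k) (a k)) ->
       bob_legal (prev_bob s a n) (a n) (bob_move s a n)) /\
    ((forall n, alice_legal (prev_bob s a n) (a n)) ->
       \bigcap_n (\bigcup_(B in bob_move s a n) B) !=set0).

Definition bob_has_winning_strategy (X : topologicalType) : Prop :=
  exists s : bob_strategy X, bob_winning s.

From HB Require Import structures.
From mathcomp Require Import finmap all_boot all_order.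
From mathcomp Require Import boolp classical_sets functions cardinality.
From mathcomp Require Import topology wochoice.
Set Implicit Arguments. Unset Strict Implicit. Unset Printing Implicit Defensive.
Local Open Scope classical_set_scope.
Local Open Scope card_scope.

(** Work inside the Cantor space 2^omega, with points [nat -> bool] and basic
   clopen sets the cylinders [cyl s] of finite codes [s].  Under CH, an
   omega_1-long recursion builds a set P = {x_alpha} with two properties: P
   meets every dense G_delta of every cylinder, and for every Bob-strategy tau
   of a coded version of BM_fin (Bob plays finite lists of codes, Alice extends
   each code by one bit) there are points e_n such that the outcome of the play
   in which Alice branches off e_n at inning n misses P.  At stage alpha the
   points e_n enumerate a countable dense set together with all earlier
   x_beta, so the outcome K_alpha is nowhere dense and misses them; a fusion
   argument then picks x_alpha in the prescribed G_delta outside K_alpha and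
   all earlier K_beta.
   The first property makes the subspace P Baire, and since P has a countable
   pi-base, P x Y is Baire whenever Y is.  A strategy of Bob in BM_fin(P) is
   shadowed by a coded strategy (shrink each of Bob's sets to a cylinder
   inside it); playing against it the e_n given by the second property, Alice
   confines the game to the outcome set, which misses P. *)

(** * The Cantor space *)

Definition cyl (s : seq bool) : set (nat -> bool) := [set y | mkseq y (size s) = s].

Definition dense_codes (O : set (seq bool)) := forall s, exists2 t, prefix s t & O t.

Definition cantor_nwd (K : set (nat -> bool)) :=
  dense_codes [set t | forall y, cyl t y -> ~ K y].

Definition gdelta (O : nat -> set (seq bool)) : set (nat -> bool) :=
  [set y | forall n, exists2 s, O n s & cyl s y].

Lemma take_mkseq (T : Type) (f : nat -> T) k n :
  take k (mkseq f n) = mkseq f (minn k n).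
Proof. by rewrite /mkseq -map_take take_iota. Qed.

Lemma prefix_size (T : eqType) (s t : seq T) : prefix s t -> size s <= size t.
Proof. by case/prefixP => r ->; rewrite size_cat leq_addr. Qed.

Lemma nth_prefix (T : eqType) (x0 : T) (s t : seq T) i :
  prefix s t -> i < size s -> nth x0 t i = nth x0 s i.
Proof. by case/prefixP => r -> lt_i; rewrite nth_cat lt_i. Qed.

Lemma cyl_mkseq y n : cyl (mkseq y n) y.
Proof. by rewrite /cyl size_mkseq. Qed.

Lemma cyl_nth s : cyl s (nth false s).
Proof. exact: mkseq_nth. Qed.

Lemma cylE s y : cyl s y <-> forall i, i < size s -> y i = nth false s i.
Proof.
split=> [ys i lt_i | ys]; first by rewrite -[in RHS]ys nth_mkseq.
by apply: (@eq_from_nth _ false); rewrite size_mkseq // => i lt_i; rewrite nth_mkseq ?ys.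
Qed.

Lemma cyl_prefix s t : prefix s t -> cyl t `<=` cyl s.
Proof.
move=> st y yt; have /minn_idPl st_size := prefix_size st.
by rewrite /cyl /= -{1}st_size -(take_mkseq y) yt; apply/eqP; rewrite -prefixE.
Qed.

Lemma prefix_mkseq s y n : cyl s y -> size s <= n -> prefix s (mkseq y n).
Proof. by move=> ys /minn_idPl sn; rewrite prefixE (take_mkseq y) sn ys. Qed.

Definition branch_off (p : nat -> bool) (s : seq bool) := rcons s (~~ p (size s)).

Lemma not_cyl_branch_off p s : ~ cyl (branch_off p s) p.
Proof.
move=> /cylE /(_ (size s)); rewrite size_rcons nth_rcons ltnn eqxx => /(_ (ltnSn _)).
by case: (p (size s)).
Qed.

Definition play_set (c : nat -> seq (seq bool)) : set (nat -> bool) :=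
  [set y | forall n, exists2 t, t \in c n & cyl t y].

Lemma play_set_nwd c : (forall s, ~ play_set c (nth false s)) -> cantor_nwd (play_set c).
Proof.
move=> avoid s; have /existsNP[n cn] := avoid s.
pose w := mkseq (nth false s) (maxn (\max_(t <- c n) size t) (size s)).
exists w; first by apply: prefix_mkseq; [exact: cyl_nth | exact: leq_maxr].
move=> y yw /(_ n)[t tc ty]; apply: cn; exists t => //.
apply: (@cyl_prefix t w); last exact: cyl_mkseq.
rewrite -(yw : mkseq y (size w) = w); apply: prefix_mkseq => //.
by rewrite size_mkseq (leq_trans _ (leq_maxl _ _)) // (@leq_bigmax_seq _ _ xpredT size).
Qed.

(** Bob's lists in [code_history] play the role of his collections, the first
   list [tau [::]] standing for the collection {X}; Alice answers each code
   by a one-bit extension that branches off the point [e n]. *)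
Definition code_strategy := seq (seq (seq bool)) -> seq (seq bool).

Fixpoint code_history (tau : code_strategy) (e : nat -> nat -> bool) n :=
  if n is m.+1 then
    let h := code_history tau e m in rcons h (map (branch_off (e m)) (tau h))
  else [::].

Definition counterplay tau e n := last [::] (code_history tau e n.+1).

Lemma code_historyE tau e n : code_history tau e n = mkseq (counterplay tau e) n.
Proof. by elim: n => //= n IH; rewrite mkseqS -IH /counterplay /= last_rcons. Qed.

Lemma counterplayE tau e n :
  counterplay tau e n = map (branch_off (e n)) (tau (mkseq (counterplay tau e) n)).
Proof. by rewrite /counterplay /= last_rcons code_historyE. Qed.

Lemma counterplay_avoid tau e n : ~ play_set (counterplay tau e) (e n).
Proof.
case/(_ n) => t; rewrite counterplayE => /mapP[s _ ->]; exact: not_cyl_branch_off.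
Qed.

Lemma cyl_limit (w : nat -> seq bool) :
    (forall n, prefix (w n) (w n.+1)) -> (forall n, size (w n) < size (w n.+1)) ->
  forall n, cyl (w n) (fun i => nth false (w i.+1) i).
Proof.
move=> wS sizeS n; apply/cylE => i lt_i.
have w_mono := homo_leq (@prefix_refl _) (@prefix_trans _) wS.
have size_w k : k <= size (w k) by elim: k => // k IH; apply: leq_ltn_trans (sizeS k).
have lt_i1 : i < size (w i.+1) by apply: size_w.
pose m := maxn n i.+1.
rewrite -(@nth_prefix _ _ _ (w m)) ?w_mono ?leq_maxr //.
by rewrite (@nth_prefix _ _ (w n)) ?w_mono ?leq_maxl.
Qed.

Lemma dense_codes_choice (O : nat -> set (seq bool)) : (forall n, dense_codes (O n)) ->
  exists f : nat -> seq bool -> seq bool, forall n s, prefix s (f n s) /\ O n (f n s).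
Proof.
move=> dO; have : forall ns : nat * seq bool, exists t, prefix ns.2 t /\ O ns.1 t.
  by case=> n s; have [t] := dO n s; exists t.
by case/choice => f fP; exists (fun n s => f (n, s)) => n s; apply: fP (n, s).
Qed.

Lemma fusion u (O : nat -> set (seq bool)) (K : nat -> set (nat -> bool)) :
    (forall n, dense_codes (O n)) -> (forall k, cantor_nwd (K k)) ->
  exists y, [/\ cyl u y, gdelta O y & forall k, ~ K k y].
Proof.
move=> dO nwdK.
have [enter enterP] := dense_codes_choice dO.
have [escape escapeP] := dense_codes_choice nwdK.
pose fix w n := if n is m.+1 then rcons (escape m (enter m (w m))) false else u.
have wS n : prefix (w n) (w n.+1).
  apply: prefix_trans (prefix_rcons _ _).
  exact: prefix_trans (enterP n _).1 (escapeP n _).1.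
have sizeS n : size (w n) < size (w n.+1).
  by rewrite /= size_rcons ltnS prefix_size // (prefix_trans (enterP n _).1 (escapeP n _).1).
have wy := cyl_limit wS sizeS; exists (fun i => nth false (w i.+1) i); split.
- exact: (wy 0).
- move=> n; exists (enter n (w n)); first exact: (enterP n _).2.
  apply: cyl_prefix (wy n.+1); rewrite /=.
  exact: prefix_trans (escapeP n _).1 (prefix_rcons _ _).
- move=> k; apply: (escapeP k (enter k (w k))).2.
  by apply: cyl_prefix (wy k.+1); rewrite /= prefix_rcons.
Qed.

(** * Well-orders and the Continuum Hypothesis *)

Section WellOrder.
Variables (T : eqType) (R : rel T).
Hypothesis R_wo : well_order R.

Let R_chain : wo_chain R predT. Proof. by move=> A _; apply: R_wo. Qed.

Lemma wo_total : total R.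
Proof. by move=> a b; apply: (wo_chainW R_chain). Qed.

Lemma wo_antisym : antisymmetric R.
Proof. by move=> a b; apply: (wo_chain_antisymmetric R_chain). Qed.

Lemma wo_min (A : set T) : A !=set0 -> exists2 z, A z & forall x, A x -> R z x.
Proof.
case=> x Ax; have neA : nonempty [pred y | `[< A y >]] by exists x; rewrite inE.
have [z [[zA zmin] _]] := R_wo neA.
by exists z => [|y Ay]; [move: zA | apply: zmin]; rewrite inE.
Qed.

Definition wo_lt b a := R b a /\ b <> a.

Lemma wo_min_lt (A : set T) z : (forall x, A x -> R z x) -> forall b, wo_lt b z -> ~ A b.
Proof. by move=> zmin b [bz nbz] Ab; apply: nbz; apply: wo_antisym; rewrite bz zmin. Qed.

Lemma wo_lt_wf : well_founded wo_lt.
Proof.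
move=> a; apply: contrapT => na.
have [|z zA zmin] := @wo_min [set x | ~ Acc wo_lt x]; first by exists a.
by apply: zA; constructor => b /(wo_min_lt zmin) /contrapT.
Qed.

Lemma countable_segments_uncountable : ~ countable [set: T] ->
  ~ countable [set a | countable [set b | wo_lt b a]].
Proof.
move=> uncT cG.
have [allG | /existsNP[a Ga]] := pselect (forall a, countable [set b | wo_lt b a]).
  by apply: uncT; apply: sub_countable cG; apply: subset_card_le => a _; apply: allG.
have [|z zG zmin] := @wo_min [set x | ~ countable [set b | wo_lt b x]]; first by exists a.
apply: zG; apply: sub_countable cG; apply: subset_card_le => b /(wo_min_lt zmin).
exact: contrapT.
Qed.

End WellOrder.

Lemma set_nat_uncountable : ~ countable [set: set nat].
Proof.
move=> /countable_injP[f f_inj].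
have inj A B : f A = f B -> A = B by apply: f_inj; rewrite inE.
pose D := [set n | exists2 A, f A = n & ~ A n].
have [DfD | nD] := pselect (D (f D)); first by case: (DfD) => A /inj -> /(_ DfD).
by apply: (nD); exists D.
Qed.

Lemma CH_countable_segments :
  CH -> exists (lt : set nat -> set nat -> Prop) (G : set (set nat)),
  [/\ well_founded lt, forall a, countable [set b | lt b a],
      forall a b, G a -> G b -> [\/ lt a b, a = b | lt b a] & G #= [set: set nat]].
Proof.
move=> ch; have [R R_wo] := well_ordering_principle (set nat).
pose G := [set a | countable [set b | wo_lt R b a]].
exists (fun b a => wo_lt R b a /\ G a), G; split.
- move=> a; elim: (wo_lt_wf R_wo a) => x _ IH.
  by constructor => y [yx _]; apply: IH.
- move=> a; have [Ga | nGa] := pselect (G a).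
    by apply: sub_countable Ga; apply: subset_card_le => b [].
  by rewrite (_ : [set b | _] = set0) //; apply/seteqP; split => // b [].
- move=> a b Ga Gb; have [-> | nab] := pselect (a = b); first by constructor 2.
  have /orP[ab | ba] := wo_total R_wo a b.
    by constructor 1; split => //; split.
  by constructor 3; split => //; split => // ba'; apply: nab.
- have [cG|//] := ch G.
  by case: (countable_segments_uncountable R_wo set_nat_uncountable cG).
Qed.

(** * The Lusin-type construction *)

Lemma countable_enum (T : Type) (A : set T) (t0 : T) :
  countable A -> exists f : nat -> T, A `<=` range f /\ range f `<=` t0 |` A.
Proof.
move=> /pfcard_geP[->|[f]]; first by exists (fun _ => t0); split => // _ [n _ <-]; left.
exists f; split; first by move=> t /'surj_f[n _ <-]; exists n.
by move=> _ [n _ <-]; right; apply: funS.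
Qed.

Definition coded (T : Type) := exists dec : set nat -> T, forall t, exists A, dec A = t.

Lemma coded_image (T U : Type) (f : T -> U) :
  (forall u, exists t, f t = u) -> coded T -> coded U.
Proof.
move=> f_surj [dec decP]; exists (f \o dec) => u.
by have [t <-] := f_surj u; have [A <-] := decP t; exists A.
Qed.

Lemma coded_set (K : countType) : coded (set K).
Proof.
exists (fun A k => A (pickle k)) => S.
exists (fun n => if unpickle n is Some k then S k else False).
by apply/funext => k /=; rewrite pickleK.
Qed.

Lemma coded_pair (T U : Type) : coded T -> coded U -> coded (T * U).
Proof.
move=> [d1 d1P] [d2 d2P]; exists (fun A => (d1 [set n | A n.*2], d2 [set n | A n.*2.+1])).
case=> t u; have [A1 <-] := d1P t; have [A2 <-] := d2P u.
exists (fun n => if odd n then A2 n./2 else A1 n./2).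
by congr (d1 _, d2 _); apply/funext => n /=; rewrite odd_double ?doubleK ?uphalf_double.
Qed.

Lemma coded_count (K : countType) (k0 : K) : coded K.
Proof.
apply: coded_image (coded_set K) => k; exists [set k].
exact: xget_unique.
Qed.

Lemma coded_fun (K L : countType) (l0 : L) : coded (K -> L).
Proof.
apply: (coded_image (f := fun (A : set (K * L)) k => xget l0 [set l | A (k, l)])).
  move=> g; exists [set p | p.2 = g p.1].
  by apply/funext => k; apply: xget_unique.
exact: coded_set.
Qed.

Lemma coded_curry (K L : countType) : coded (K -> set L).
Proof.
apply: (coded_image (f := fun (A : set (K * L)) k l => A (k, l))); last exact: coded_set.
by move=> O; exists [set p | O p.1 p.2].
Qed.

(** A requirement is a coded strategy to defeat together with the dense
   G_delta [gdelta O] of the cylinder of [u] to meet. *)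
Definition requirement := (code_strategy * (seq bool * (nat -> set (seq bool))))%type.

Lemma coded_requirement : coded requirement.
Proof.
apply: coded_pair; first exact: coded_fun [::].
by apply: coded_pair; [exact: coded_count [::] | exact: coded_curry].
Qed.

Lemma wf_countable_choice (I D : Type) (lt : I -> I -> Prop) (Inv : set D)
    (S : I -> set D -> D -> Prop) :
    well_founded lt -> (forall a, countable [set b | lt b a]) ->
    (forall a V, countable V -> V `<=` Inv -> exists2 d, Inv d & S a V d) ->
  exists F : I -> D, forall a, Inv (F a) /\ S a (F @` [set b | lt b a]) (F a).
Proof.
move=> wf cseg step.
have /choice[f fP] : forall aV : I * set D, exists d,
    countable aV.2 -> aV.2 `<=` Inv -> Inv d /\ S aV.1 aV.2 d.
  case=> a V; have [[cV VI] | nV] := pselect (countable V /\ V `<=` Inv).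
    by have [d Id Sd] := step a V cV VI; exists d.
  by have [d _ _] := step a set0 (countable0 _) (sub0set _); exists d => cV VI; case: nV.
pose F := Fix wf (fun _ => D)
  (fun a rec => f (a, [set d | exists b (h : lt b a), rec b h = d])).
have FE a : F a = f (a, F @` [set b | lt b a]).
  rewrite /F Fix_eq => [|b r r' rr]; last first.
    have -> // : r = r'.
    by apply: functional_extensionality_dep => c; apply: functional_extensionality_dep.
  congr (f (a, _)); apply/seteqP; split => [d [b [h <-]] | d [b h <-]]; first by exists b.
  by exists b, h.
exists F => a; elim/(well_founded_ind wf): a => a IH; rewrite FE; apply: fP.
  exact: sub_countable (card_image_le _ _) (cseg a).
by move=> _ [b ltba <-]; apply: (IH b ltba).1.
Qed.

Lemma lusin_step (tau : code_strategy) u (O : nat -> set (seq bool))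
    (xs : nat -> nat -> bool) (Ks : nat -> set (nat -> bool)) :
    (forall n, dense_codes (O n)) -> (forall k, cantor_nwd (Ks k)) ->
  exists e, [/\ cantor_nwd (play_set (counterplay tau e)),
    forall n, ~ play_set (counterplay tau e) (xs n) &
    exists x, [/\ cyl u x, gdelta O x, ~ play_set (counterplay tau e) x &
                  forall k, ~ Ks k x]].
Proof.
move=> dO nwdKs.
(* Even values of [e] run through the dense set of eventually false points,
   odd values through [xs]. *)
pose e n := if odd n then xs n./2 else nth false (odflt [::] (unpickle n./2)).
pose K := play_set (counterplay tau e).
have nwdK : cantor_nwd K.
  apply: play_set_nwd => s; have := @counterplay_avoid tau e (pickle s).*2.
  by rewrite /e odd_double doubleK pickleK.
exists e; split => // [n | ].
  by have := @counterplay_avoid tau e n.*2.+1; rewrite /e /= odd_double /= uphalf_double.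
have [x [ux Ox Kx]] := @fusion u O (fun k => if k is k'.+1 then Ks k' else K) dO
  (fun k => if k is k'.+1 then nwdKs k' else nwdK).
by exists x; split => // [|k]; [exact: (Kx 0) | exact: (Kx k.+1)].
Qed.

Definition meets_dense_Gdelta (P : set (nat -> bool)) :=
  forall u O, (forall n, dense_codes (O n)) -> exists2 y, P y & cyl u y /\ gdelta O y.

Definition escapes_counterplays (P : set (nat -> bool)) :=
  forall tau, exists e, forall y, P y -> ~ play_set (counterplay tau e) y.

Lemma CH_requirement_enum : CH -> exists (lt : set nat -> set nat -> Prop)
    (G : set (set nat)) (req : set nat -> requirement),
  [/\ well_founded lt, forall a, countable [set b | lt b a],
      forall a b, G a -> G b -> [\/ lt a b, a = b | lt b a] &
      forall r, exists2 a, G a & req a = r].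
Proof.
move=> /CH_countable_segments[lt [G [wf cseg tri /card_set_bijP[f [_ _ f_surj]]]]].
have [dec decP] := coded_requirement.
exists lt, G, (dec \o f); split => // r.
by have [A <-] := decP r; have [a Ga <-] := f_surj A I; exists a.
Qed.

Local Notation stage_data := ((nat -> bool) * set (nat -> bool))%type.

(** Stage alpha produces [d = (x_alpha, K_alpha)]; [V] collects the earlier stages. *)
Definition lusin_stage (r : requirement) (V : set stage_data) (d : stage_data) :=
  [/\ exists e, d.2 = play_set (counterplay r.1 e),
      (forall n, dense_codes (r.2.2 n)) -> cyl r.2.1 d.1 /\ gdelta r.2.2 d.1,
      ~ d.2 d.1 & forall v, V v -> ~ d.2 v.1 /\ ~ v.2 d.1].

Lemma lusin_stage_exists r (V : set stage_data) :
    countable V -> (forall v, V v -> cantor_nwd v.2) ->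
  exists2 d, cantor_nwd d.2 & lusin_stage r V d.
Proof.
case: r => tau [u O] cV nwdV; pose d0 : stage_data := (fun _ => false, set0).
have [v [Vv vV]] := countable_enum d0 cV.
have nwd_v k : cantor_nwd (v k).2.
  have [-> s | /nwdV //] : (d0 |` V) (v k) by apply: vV; exists k.
  by exists s; [exact: prefix_refl | move=> y _].
(* A requirement whose code sets are not all dense imposes nothing. *)
pose O' := if pselect (forall n, dense_codes (O n)) is left _ then O else fun _ => setT.
have dO' n : dense_codes (O' n).
  by rewrite /O'; case: pselect => // _ s; exists s; first exact: prefix_refl.
have [e [nwdK Kv [x [ux Ox Kx vx]]]] := lusin_step tau u (fun k => (v k).1) dO' nwd_v.
exists (x, play_set (counterplay tau e)) => //; split => /=.
- by exists e.
- by move: Ox; rewrite /O'; case: pselect.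
- exact: Kx.
- by move=> w /Vv[k _ <-]; split; [apply: Kv | apply: vx].
Qed.

Theorem CH_lusin_set : CH -> exists P, meets_dense_Gdelta P /\ escapes_counterplays P.
Proof.
move=> /CH_requirement_enum[lt [G [req [wf cseg tri req_onto]]]].
have [F FP] := wf_countable_choice wf cseg
  (fun a V cV nwdV => lusin_stage_exists (req a) cV nwdV).
exists ((fun a => (F a).1) @` G); split.
  move=> u O dO; have [a Ga ra] := req_onto ((fun _ => [::]), (u, O)).
  have [_ [_ ]] := FP a; rewrite ra /= => /(_ dO)[ux Ox] _ _.
  by exists (F a).1; [exists a | ].
move=> tau; have [a Ga ra] := req_onto (tau, ([::], fun _ => setT)).
have [_ [[e Ee] _ Ka Va]] := FP a; rewrite ra /= in Ee.
exists e => _ [b Gb <-]; rewrite -Ee; have [_ [_ _ _ Vb]] := FP b.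
case: (tri a b Ga Gb) => [ab | <- // | ba].
  by apply: (Vb (F a) _).2; exists a.
by apply: (Va (F b) _).1; exists b.
Qed.

(** * Baire products *)

Lemma open_box (X Y : topologicalType) (W : set (X * Y)) x y : open W -> W (x, y) ->
  exists U V, [/\ open U, open V, U x, V y & U `*` V `<=` W].
Proof.
rewrite openE => /(_ _ _)/[apply] -[[Q R] /= [nQ nR] QRW].
move: nQ nR; rewrite !nbhsE => -[U [oU Ux] UQ] [V [oV Vy] VR].
by exists U, V; split => // -[a b] [/= Ua Vb]; apply: QRW; split; [apply: UQ | apply: VR].
Qed.

Lemma open_setX (X Y : topologicalType) (U : set X) (V : set Y) :
  open U -> open V -> open (U `*` V).
Proof.
move=> oU oV; rewrite openE => -[a b] [/= Ua Vb].
by exists (U, V) => //=; split; apply: open_nbhs_nbhs.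
Qed.

Lemma open_slice (X Y : topologicalType) (W : set (X * Y)) y :
  open W -> open [set x | W (x, y)].
Proof.
move=> oW; rewrite openE => x Wxy; have [U [V [oU _ Ux Vy UVW]]] := open_box oW Wxy.
by rewrite /interior nbhsE; exists U => // x' Ux'; apply: UVW.
Qed.

Lemma productively_baire_pi_base (X : topologicalType) (K : countType) (B : K -> set X) :
    (forall i, open (B i) /\ B i !=set0) ->
    (forall U, open U -> U !=set0 -> exists i, B i `<=` U) ->
  baire_space X -> productively_baire X.
Proof.
move=> oB piB bX; split => // Y bY W oW O [[x0 y0] Oxy] oO.
have [U0 [V0 [oU0 oV0 U0x V0y0 UVO]]] := open_box oO Oxy.
have [i0 BU0] := piB U0 oU0 (ex_intro _ x0 U0x).
pose E (ni : nat * K) := snd @` (W ni.1 `&` (B ni.2 `*` setT)).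
pose En m := if unpickle m is Some ni then E ni else setT.
have oE ni : open (E ni) /\ dense (E ni).
  split; first by apply: snd_open; apply: openI (oW _).1 (open_setX (oB _).1 openT).
  move=> V [y Vy] oV; have [x Bx] := (oB ni.2).2.
  have [[a b] [[/= Ba Vb] Wab]] := (oW ni.1).2 (B ni.2 `*` V)
    (ex_intro _ (x, y) (conj Bx Vy)) (open_setX (oB _).1 oV).
  by exists b; split => //; exists (a, b).
have oEn m : open (En m) /\ dense (En m).
  rewrite /En; case: unpickle => [ni|]; first exact: oE.
  by split; [exact: openT | move=> V [v ?] _; exists v].
have [y [V0y Eny]] := bY En oEn V0 (ex_intro _ y0 V0y0) oV0.
have Ey n i : E (n, i) y by have := Eny (pickle (n, i)) I; rewrite /En pickleK.
have oF n : open [set x | W n (x, y)] /\ dense [set x | W n (x, y)].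
  split; first exact: open_slice (oW n).1.
  move=> U Un0 oU; have [i BU] := piB U oU Un0.
  by have [[x y'] [Wxy [/= Bx _]] /= <-] := Ey n i; exists x; split => //; apply: BU.
have [x [Bx Fx]] := bX _ oF (B i0) (oB i0).2 (oB i0).1.
by exists (x, y); split; [apply: UVO; split; [apply: BU0|] | move=> n _; apply: Fx].
Qed.

Record subcantor (P : set (nat -> bool)) :=
  SubCantor { scval : nat -> bool; scvalP : P scval }.
HB.instance Definition _ P := gen_eqMixin (subcantor P).
HB.instance Definition _ P := gen_choiceMixin (subcantor P).

Definition subcyl P s : set (subcantor P) := [set x | cyl s (scval x)].
Arguments subcyl : clear implicits.

Definition cyl_open P (U : set (subcantor P)) :=
  forall x, U x -> exists2 s, cyl s (scval x) & subcyl P s `<=` U.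

Lemma cyl_openT P : cyl_open [set: subcantor P].
Proof. by move=> x _; exists [::]. Qed.

Lemma cyl_openI P : setI_closed (@cyl_open P).
Proof.
move=> U V oU oV x [Ux Vx]; have [s xs sU] := oU x Ux; have [t xt tV] := oV x Vx.
exists (mkseq (scval x) (maxn (size s) (size t))); first exact: cyl_mkseq.
move=> y xy; split; [apply: sU | apply: tV];
  by apply: cyl_prefix xy; apply: prefix_mkseq; rewrite ?leq_maxl ?leq_maxr.
Qed.

Lemma cyl_open_bigcup P (I : Type) (U : I -> set (subcantor P)) :
  (forall i, cyl_open (U i)) -> cyl_open (\bigcup_i U i).
Proof.
by move=> oU x [i _ Uix]; have [s xs sU] := oU i x Uix; exists s => // y /sU; exists i.
Qed.

HB.instance Definition _ P :=
  isOpenTopological.Build (subcantor P)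
    (@cyl_openT P) (@cyl_openI P) (@cyl_open_bigcup P).

Section SubcantorBaire.
Variable P : set (nat -> bool).
Hypothesis P_meets : meets_dense_Gdelta P.

Lemma open_subcyl s : open (subcyl P s).
Proof. by move=> x xs; exists s. Qed.

Lemma subcyl_neq0 s : subcyl P s !=set0.
Proof.
have [|y Py [sy _]] := P_meets s (O := fun _ => setT).
  by move=> _ t; exists t => //; apply: prefix_refl.
by exists (SubCantor Py).
Qed.

Lemma subcyl_pi_base (U : set (subcantor P)) :
  open U -> U !=set0 -> exists s, subcyl P s `<=` U.
Proof. by move=> oU [x /oU[s _ sU]]; exists s. Qed.

Lemma subcantor_baire : baire_space (subcantor P).
Proof.
move=> F oF O O0 oO; have [s sO] := subcyl_pi_base oO O0.
pose codes_in n := [set t | subcyl P t `<=` F n].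
have dcodes n : dense_codes (codes_in n).
  move=> w; have [x [wx Fx]] := (oF n).2 _ (@subcyl_neq0 w) (@open_subcyl w).
  have [t xt tF] := (oF n).1 x Fx.
  exists (mkseq (scval x) (maxn (size w) (size t))).
    by apply: prefix_mkseq; rewrite ?leq_maxl.
  move=> z zw; apply: tF; apply: cyl_prefix zw.
  by apply: prefix_mkseq; rewrite ?leq_maxr.
have [y Py [sy Fy]] := P_meets s dcodes.
exists (SubCantor Py); split; first exact: sO.
by move=> n _; have [t tF ty] := Fy n; apply: tF.
Qed.

Lemma subcantor_productively_baire : productively_baire (subcantor P).
Proof.
apply: (@productively_baire_pi_base _ _ (subcyl P)) subcantor_baire.
  by move=> s; split; [exact: open_subcyl | exact: subcyl_neq0].
exact: subcyl_pi_base.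
Qed.

End SubcantorBaire.

(** * The game *)

Section Game.
Variable P : set (nat -> bool).
Hypotheses (P_meets : meets_dense_Gdelta P) (P_escapes : escapes_counterplays P).
Local Notation X := (subcantor P).

(* Junk value [[::]] unless [B] contains a cylinder. *)
Definition inner_code (B : set X) : seq bool := xget [::] [set s | subcyl P s `<=` B].

Lemma subcyl_inner_code (B : set X) :
  open B -> B !=set0 -> subcyl P (inner_code B) `<=` B.
Proof.
move=> oB B0; have [s sB] := subcyl_pi_base oB B0.
exact: (xgetI [::] (sB : [set s | subcyl P s `<=` B] s)).
Qed.

(** The [i]-th code of [cs] answers the [i]-th member of the enumeration
   [fset_set F] of Bob's finite collection [F]. *)
Definition coded_move (cs : seq (seq bool)) (F : set (set X)) : set X -> set X :=
  fun B => if `[< F B >] then subcyl P (nth [::] cs (index B (fset_set F))) else set0.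

Variable sigma : bob_strategy X.

Definition current_collection (h : seq (set X -> set X)) : set (set X) :=
  if h is [::] then [set setT] else sigma h.

Lemma prev_bobE a n : prev_bob sigma a n = current_collection (mkseq a n).
Proof. by case: n. Qed.

Fixpoint alice_history (c : nat -> seq (seq bool)) n :=
  if n is m.+1 then
    let h := alice_history c m in rcons h (coded_move (c m) (current_collection h))
  else [::].

Definition alice_play c n := last (fun _ => set0) (alice_history c n.+1).

Lemma alice_historyE c n : alice_history c n = mkseq (alice_play c) n.
Proof. by elim: n => //= n IH; rewrite mkseqS -IH /alice_play /= last_rcons. Qed.

Lemma alice_playE c n :
  alice_play c n = coded_move (c n) (current_collection (mkseq (alice_play c) n)).
Proof. by rewrite /alice_play /= last_rcons alice_historyE. Qed.

Lemma alice_history_ext c c' n : (forall i, i < n -> c i = c' i) ->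
  alice_history c n = alice_history c' n.
Proof.
elim: n => //= n IH cc'; rewrite cc' // IH // => i lt_in.
by apply: cc'; apply: ltnW.
Qed.

(** Decodes Alice's moves from the lists played so far, replays [sigma] on them
   and shrinks each set of its answer to a cylinder. *)
Definition shadow_strategy : code_strategy := fun H =>
  map inner_code (fset_set (current_collection (alice_history (nth [::] H) (size H)))).

Definition collection_ok (F : set (set X)) :=
  finite_set F /\ forall B, F B -> open B /\ B !=set0.

Section Shadow.
Variable e : nat -> nat -> bool.
Let c := counterplay shadow_strategy e.
Let a := alice_play c.

Lemma shadow_counterplayE n :
  c n = map (branch_off (e n)) (map inner_code (fset_set (prev_bob sigma a n))).
Proof.
rewrite /c counterplayE /shadow_strategy size_mkseq prev_bobE /a -alice_historyE.
congr (map _ (map _ (fset_set (current_collection _)))).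
by apply: alice_history_ext => i lt_in; rewrite nth_mkseq.
Qed.

Lemma alice_play_in n B : finite_set (prev_bob sigma a n) -> prev_bob sigma a n B ->
  a n B = subcyl P (branch_off (e n) (inner_code B)).
Proof.
move=> fin_prev prevB; have Bin : B \in fset_set (prev_bob sigma a n).
  by rewrite in_fset_set // inE.
rewrite {1}/a alice_playE -/a -prev_bobE /coded_move asboolT // -/c shadow_counterplayE.
by rewrite -map_comp (nth_map set0) ?index_mem // nth_index.
Qed.

Lemma alice_play_out n B : ~ prev_bob sigma a n B -> a n B = set0.
Proof. by move=> nprevB; rewrite {1}/a alice_playE -/a -prev_bobE /coded_move asboolF. Qed.

Lemma alice_play_legal n : collection_ok (prev_bob sigma a n) ->
  alice_legal (prev_bob sigma a n) (a n).
Proof.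
move=> [fin_prev ok_prev] B; split => [prevB | /alice_play_out //].
have [oB B0] := ok_prev B prevB; rewrite alice_play_in //.
split; first exact: open_subcyl; split; first exact: subcyl_neq0.
by move=> x /cyl_prefix-/(_ _ (prefix_rcons _ _)) x_in; apply: subcyl_inner_code.
Qed.

Lemma alice_play_bob_covered n B z : collection_ok (prev_bob sigma a n) ->
  bob_legal (prev_bob sigma a n) (a n) (bob_move sigma a n) ->
  bob_move sigma a n B -> B z -> exists2 t, t \in c n & cyl t (scval z).
Proof.
move=> [fin_prev _] [_ okB] Bn Bz; have [_ [_ /(_ z Bz)[C prevC]]] := okB B Bn.
rewrite alice_play_in // => zC; exists (branch_off (e n) (inner_code C)); last exact: zC.
by rewrite shadow_counterplayE; do 2 apply: map_f; rewrite in_fset_set ?inE.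
Qed.

End Shadow.

Lemma subcantor_no_bob_winning : ~ bob_winning sigma.
Proof.
move=> win; have [e eP] := P_escapes shadow_strategy.
set a := alice_play (counterplay shadow_strategy e).
have bob_ok n : (forall k, k <= n -> collection_ok (prev_bob sigma a k)) ->
    bob_legal (prev_bob sigma a n) (a n) (bob_move sigma a n).
  by move=> okn; apply: (win a).1 => k kn; apply: alice_play_legal; apply: okn.
have ok n k : k <= n -> collection_ok (prev_bob sigma a k).
  elim: n k => [k | n IH k].
    rewrite leqn0 => /eqP -> /=; split; first exact: finite_set1.
    by move=> _ ->; split; [exact: openT | have [x _] := subcyl_neq0 P_meets [::]; exists x].
  rewrite leq_eqVlt => /predU1P[-> | ]; last exact: IH.
  have [fin okB] := bob_ok n IH; split; first exact: fin.
  by move=> B /okB[oB [B0 _]].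
have [z zB] := (win a).2 (fun n => alice_play_legal (ok n n (leqnn n))).
apply: (eP (scval z) (scvalP z)) => n; have [B Bn Bz] := zB n I.
exact: alice_play_bob_covered (ok n n (leqnn n)) (bob_ok n (ok n)) Bn Bz.
Qed.

End Game.

Theorem corollary4p12 :
  CH -> exists X : topologicalType,
    productively_baire X /\ ~ bob_has_winning_strategy X.
Proof.
move=> /CH_lusin_set[P [P_meets P_escapes]]; exists (subcantor P); split.
  exact: subcantor_productively_baire.
by move=> [sigma]; apply: subcantor_no_bob_winning.
Qed.
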